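(* In the setting of the context, for all $b\in B$ and $y\in M_1$ we have $yb=\lambda^{-1}b_{(2)}E_{M_1}(e_2yb_{(1)})$, where $\Delta(b)=b_{(1)}\otimes b_{(2)}$.
   Context: $k$ is a field; $C_R(S)=\{r\in R:rs=sr\ \forall s\in S\}$. $N\subseteq M$ is a strongly separable, irreducible extension of $k$-algebras: $C_M(N)=k1$ and there are an $N$-bimodule map $E:M\to N$ and $x_1,\dots,x_n,y_1,\dots,y_n\in M$ with $\sum_iE(mx_i)y_i=m=\sum_ix_iE(y_im)$ for all $m\in M$, $E(1)\neq0$, $\sum_ix_iy_i\neq0$; normalized so that $E(1)=1$, whence $\sum_ix_iy_i=\lambda^{-1}1$ with $0\neq\lambda\in k$. Basic construction: given $S\subseteq R$, an $S$-bimodule map $E_S:R\to S$ with $E_S(1)=1$ and $r_i,s_i\in R$ with $\sum_iE_S(rr_i)s_i=r=\sum_ir_iE_S(s_ir)$ and $\sum_ir_is_i=\lambda^{-1}1$, set $R_1=R\otimes_SR$ with product $(a\otimes b)(c\otimes d)=aE_S(bc)\otimes d$, unit $\sum_ir_i\otimes s_i$, $R\subseteq R_1$ via $r\mapsto\sum_irr_i\otimes s_i$, Jones idempotent $e=1\otimes1$, $E_R:R_1\to R$, $a\otimes b\mapsto\lambda ab$; then $E_R$, $\lambda^{-1}r_i\otimes1$, $1\otimes s_i$ satisfy the same conditions with the same $\lambda$. From $(N\subseteq M,E)$ get $M_1,e_1,E_M$; from $(M\subseteq M_1,E_M)$ get $M_2,e_2,E_{M_1}$. Let $A=C_{M_1}(N)$,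 $B=C_{M_2}(M)$, $C=C_{M_2}(N)$. Depth 2 is assumed: $M_1$ is free as right $M$-module with basis in $A$, $M_2$ free as right $M_1$-module with basis in $B$. Let $F=E_M\circ E_{M_1}$, with values on $C$ in $k1\cong k$. The bilinear form $\langle a,b\rangle=\lambda^{-2}F(ae_2e_1b)$ ($a\in A,b\in B$) is non-degenerate, and the comultiplication $\Delta:B\to B\otimes B$, $b\mapsto b_{(1)}\otimes b_{(2)}$, is defined by $\langle a,b_{(1)}\rangle\langle a',b_{(2)}\rangle=\langle aa',b\rangle$ for all $a,a'\in A$. *)

(* The whole tower N ⊆ M ⊆ M1 ⊆ M2 is realised inside one
   ambient k-algebra R; subalgebras are Prop-valued predicates on R. *)
From HB Require Import structures.
From mathcomp Require Import all_boot all_algebra.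
Set Implicit Arguments. Unset Strict Implicit. Unset Printing Implicit Defensive.
Import GRing.Theory.
Local Open Scope ring_scope.

Section Defs.
Variables (k : fieldType) (R : algType k).

Definition subalg (S : R -> Prop) : Prop :=
  [/\ S 1, (forall x y, S x -> S y -> S (x + y)),
      (forall x y, S x -> S y -> S (x * y)) &
      (forall (c : k) x, S x -> S (c *: x))].

Definition subset (S T : R -> Prop) : Prop := forall x, S x -> T x.

Definition centralizer (T S : R -> Prop) : R -> Prop :=
  fun r => T r /\ forall s, S s -> r * s = s * r.

Definition bimodule_map (S T : R -> Prop) (E : R -> R) : Prop :=
  [/\ forall x, T x -> S (E x),
      forall x y, T x -> T y -> E (x + y) = E x + E y,
      forall (c : k) x, T x -> E (c *: x) = c *: E x &
      forall a x b, S a -> T x -> S b -> E (a * x * b) = a * E x * b].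

Definition quasi_basis (S T : R -> Prop) (E : R -> R) n (x y : 'I_n -> R) : Prop :=
  (forall i, T (x i) /\ T (y i)) /\
  (forall m, T m -> \sum_(i < n) E (m * x i) * y i = m /\
                    \sum_(i < n) x i * E (y i * m) = m).

(* N ⊆ M strongly separable, irreducible, normalised with E(1)=1,
   sum_i x_i y_i = lam^-1 1, lam <> 0 *)
Record ss_irreducible (N M : R -> Prop) (E : R -> R) n (x y : 'I_n -> R)
  (lam : k) : Prop := {
  ssi_subN : subalg N;
  ssi_subM : subalg M;
  ssi_NM : subset N M;
  ssi_E : bimodule_map N M E;
  ssi_qb : quasi_basis N M E x y;
  ssi_E1 : E 1 = 1;
  ssi_lam : \sum_(i < n) x i * y i = lam^-1 *: 1;
  ssi_lam0 : lam != 0;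
  ssi_irr : forall m, centralizer M N m -> exists c : k, m = c *: 1 }.

(* T1 (together with e, ET) is the basic construction of (S ⊆ T, ES, r, s, lam):
   T1 ≅ T ⊗_S T via a ⊗ b |-> a e b  (so e = 1 ⊗ 1), T ⊆ T1 via the unital
   embedding (sum_i r_i e s_i = 1), product (a e b)(c e d) = a ES(bc) e d,
   and ET(a e b) = lam a b. *)
Record basic_construction (S T T1 : R -> Prop) (ES : R -> R) n
  (r s : 'I_n -> R) (lam : k) (e : R) (ET : R -> R) : Prop := {
  bc_sub : subalg T1;
  bc_incl : subset T T1;
  bc_e : T1 e;
  bc_eS : forall a, S a -> e * a = a * e;
  bc_eTe : forall a, T a -> e * a * e = ES a * e;
  bc_unit : \sum_(i < n) r i * e * s i = 1;
  bc_span : forall z, T1 z -> exists m (a b : 'I_m -> R),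
      (forall j, T (a j) /\ T (b j)) /\ z = \sum_(j < m) a j * e * b j;
  bc_ET : forall a b, T a -> T b -> ET (a * e * b) = lam *: (a * b);
  bc_ETadd : forall z w, T1 z -> T1 w -> ET (z + w) = ET z + ET w;
  bc_ETscale : forall (c : k) z, T1 z -> ET (c *: z) = c *: ET z }.

Definition right_free_basis (Sub T : R -> Prop) n (u : 'I_n -> R) : Prop :=
  (forall i, T (u i)) /\
  (forall z, T z -> exists c : 'I_n -> R,
      (forall i, Sub (c i)) /\ z = \sum_(i < n) u i * c i) /\
  (forall c : 'I_n -> R, (forall i, Sub (c i)) ->
      \sum_(i < n) u i * c i = 0 -> forall i, c i = 0).

Definition depth2 (N M M1 M2 : R -> Prop) : Prop :=
  (exists n (u : 'I_n -> R), (forall i, centralizer M1 N (u i)) /\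
      right_free_basis M M1 u) /\
  (exists n (u : 'I_n -> R), (forall i, centralizer M2 M (u i)) /\
      right_free_basis M1 M2 u).

(* <a, b> = lam^-2 F(a e2 e1 b), F = E_M o E_{M1}; value in k1 ⊆ R *)
Definition pairing (lam : k) (EM EM1 : R -> R) (e1 e2 a b : R) : R :=
  lam ^- 2 *: EM (EM1 (a * e2 * e1 * b)).

End Defs.

(* Write Z(y) for the difference of the two sides. Since b, b_(1), b_(2) and e2 commute
   with M, Z(p e1 q) = p Z(e1) q for p, q in M, and M1 is spanned by such products, so it
   suffices that Z(e1) = 0. Depth 2 provides dual bases in B and A: an element z of M2
   vanishes once E_M1(g z) = 0 for all g in B, and an element w of M1 once E_M(c w) = 0
   for all c in A. For g in B one has g e1 = a e2 e1 with a in A, and irreducibility of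
   M in M1 (lifted from N in M) makes E_M1(g b') = lam <a, b'> a scalar for b' in B. Then
   E_M(E_M1(c g Z(e1))) = lam^2 (<c a, b> - sum_j <c, b_(1)j> <a, b_(2)j>), which is zero
   by the definition of the comultiplication. *)

From Pilot Require Import Defs.
From HB Require Import structures.
From mathcomp Require Import all_boot all_algebra.
Import GRing.Theory.
Local Open Scope ring_scope.
Set Implicit Arguments. Unset Strict Implicit. Unset Printing Implicit Defensive.

Section Subalgebra.
Variables (k : fieldType) (R : algType k).

Definition irreducible (S T : R -> Prop) : Prop :=
  forall m, centralizer T S m -> exists c : k, m = c *: 1.

Variables (P : R -> Prop) (hP : subalg P).

Lemma subalg1 : P 1. Proof. by case: hP. Qed.
Lemma subalgD x y : P x -> P y -> P (x + y). Proof. by case: hP => _ + _ _; apply. Qed.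
Lemma subalgM x y : P x -> P y -> P (x * y). Proof. by case: hP => _ _ + _; apply. Qed.
Lemma subalgZ (c : k) x : P x -> P (c *: x). Proof. by case: hP => _ _ _; apply. Qed.
Lemma subalg0 : P 0. Proof. by rewrite -(scale0r 1); apply/subalgZ/subalg1. Qed.
Lemma subalgN x : P x -> P (- x).
Proof. by rewrite -scaleN1r; apply: subalgZ. Qed.
Lemma subalg_sum m (F : 'I_m -> R) : (forall i, P (F i)) -> P (\sum_(i < m) F i).
Proof. by move=> PF; apply: big_ind => //; [exact: subalg0 | exact: subalgD]. Qed.

End Subalgebra.

Create HintDb subalg.
#[export] Hint Extern 1 => match goal with
  | H : centralizer ?T _ ?x |- ?T ?x => exact: H.1
  | |- _ 1 => apply: subalg1
  | |- _ 0 => apply: subalg0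
  | |- _ (_ + _) => apply: subalgD
  | |- _ (- _) => apply: subalgN
  | |- _ (_ * _) => apply: subalgM
  | |- _ (_ *: _) => apply: subalgZ
  | |- _ (bigop.body _ _ _) => apply: subalg_sum
  end : subalg.

Ltac in_subalg := solve [auto 20 with subalg].

Section BasicConstruction.
Variables (k : fieldType) (R : algType k) (S T T1 : R -> Prop) (ES ET : R -> R).
Variables (n : nat) (r s : 'I_n -> R) (lam : k) (e : R).
Hypotheses (hT : subalg T) (hST : Defs.subset S T) (hES : forall x, T x -> S (ES x)).
Hypotheses (hqb : quasi_basis S T ES r s) (hbc : basic_construction S T T1 ES r s lam e ET).
Hypothesis hlam : lam != 0.

Let hT1 : subalg T1 := bc_sub hbc.
Let T_T1 : forall x, T x -> T1 x := bc_incl hbc.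
Let S_T : forall x, S x -> T x := hST.
Let e_T1 : T1 e := bc_e hbc.
Let r_T i : T (r i) := (hqb.1 i).1.
Let s_T i : T (s i) := (hqb.1 i).2.
#[local] Hint Resolve hT hT1 T_T1 S_T hES e_T1 r_T s_T : subalg.

Lemma ET0 : ET 0 = 0.
Proof. by have := bc_ETscale hbc 0 (subalg0 hT1); rewrite !scale0r. Qed.

Lemma ET_sum m (F : 'I_m -> R) : (forall i, T1 (F i)) ->
  ET (\sum_(i < m) F i) = \sum_(i < m) ET (F i).
Proof.
elim: m F => [|m IHm] F T1F; first by rewrite !big_ord0 ET0.
by rewrite !big_ord_recr (bc_ETadd hbc) ?IHm //; in_subalg.
Qed.

Lemma ET_sub x y : T1 x -> T1 y -> ET (x - y) = ET x - ET y.
Proof.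
move=> T1x T1y.
by rewrite -scaleN1r (bc_ETadd hbc) ?(bc_ETscale hbc) ?scaleN1r //; in_subalg.
Qed.

Lemma ET_span m (a b : 'I_m -> R) : (forall j, T (a j) /\ T (b j)) ->
  ET (\sum_(j < m) a j * e * b j) = lam *: \sum_(j < m) a j * b j.
Proof.
move=> Tab; rewrite ET_sum => [|j]; last by case: (Tab j) => *; in_subalg.
by rewrite scaler_sumr; apply: eq_bigr => j _; case: (Tab j) => *; apply: (bc_ET hbc).
Qed.

Lemma ET_mule x : T x -> ET (x * e) = lam *: x.
Proof. by move=> Tx; rewrite -[x * e]mulr1 (bc_ET hbc) ?mulr1 //; in_subalg. Qed.

Lemma ET_T z : T1 z -> T (ET z).
Proof.
move=> /(bc_span hbc) [m [a [b [Tab ->]]]]; rewrite ET_span //.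
by apply: subalgZ => //; apply: subalg_sum => // j; case: (Tab j) => *; in_subalg.
Qed.
#[local] Hint Resolve ET_T : subalg.

Lemma ET_bimod a z c : T a -> T1 z -> T c -> ET (a * z * c) = a * ET z * c.
Proof.
move=> Ta /(bc_span hbc) [m [a' [b' [Tab ->]]]] Tc.
have Tab' j : T (a * a' j) /\ T (b' j * c) by case: (Tab j) => *; split; in_subalg.
have -> : a * (\sum_(j < m) a' j * e * b' j) * c = \sum_(j < m) (a * a' j) * e * (b' j * c).
  by rewrite mulr_sumr mulr_suml; apply: eq_bigr => j _; rewrite !mulrA.
rewrite !ET_span // -scalerAr -scalerAl mulr_sumr mulr_suml.
by congr (_ *: _); apply: eq_bigr => j _; rewrite !mulrA.
Qed.

Lemma ETMl a z : T a -> T1 z -> ET (a * z) = a * ET z.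
Proof. by move=> Ta T1z; have := ET_bimod Ta T1z (subalg1 hT); rewrite !mulr1. Qed.

Lemma ETMr z c : T1 z -> T c -> ET (z * c) = ET z * c.
Proof. by move=> T1z Tc; have := ET_bimod (subalg1 hT) T1z Tc; rewrite !mul1r. Qed.

Lemma quasi_basis_ETr z : T1 z ->
  \sum_(i < n) (lam^-1 *: (r i * e)) * ET (e * s i * z) = z.
Proof.
move=> /[dup] T1z /(bc_span hbc) [m [a [b [Tab Dz]]]].
have ET_esz i : ET (e * s i * z) = \sum_(j < m) lam *: (ES (s i * a j) * b j).
  rewrite Dz mulr_sumr ET_sum => [|j]; last by case: (Tab j) => *; in_subalg.
  apply: eq_bigr => j _; case: (Tab j) => Ta Tb.
  by rewrite !mulrA -(mulrA e) (bc_eTe hbc) ?(bc_ET hbc) //; in_subalg.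
under eq_bigr => i _ do rewrite ET_esz mulr_sumr.
rewrite exchange_big [RHS]Dz; apply: eq_bigr => j _ /=.
have [Ta Tb] := Tab j; have [_ Da] := hqb.2 _ Ta.
rewrite -[in RHS]Da !mulr_suml; apply: eq_bigr => i _.
rewrite -scalerAr -scalerAl scalerA mulfV // scale1r.
have eX : e * ES (s i * a j) = ES (s i * a j) * e by apply: (bc_eS hbc); in_subalg.
by rewrite !mulrA -(mulrA (r i)) -eX !mulrA.
Qed.

Lemma quasi_basis_ETl z : T1 z ->
  \sum_(i < n) ET (z * (lam^-1 *: (r i * e))) * (e * s i) = z.
Proof.
move=> /[dup] T1z /(bc_span hbc) [m [a [b [Tab Dz]]]].
have ET_zre i : ET (z * (lam^-1 *: (r i * e))) = \sum_(j < m) a j * ES (b j * r i).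
  rewrite -scalerAr (bc_ETscale hbc) //; last by in_subalg.
  rewrite Dz mulr_suml ET_sum => [|j]; last by case: (Tab j) => *; in_subalg.
  rewrite scaler_sumr; apply: eq_bigr => j _; case: (Tab j) => Ta Tb.
  have -> : a j * e * b j * (r i * e) = a j * (e * (b j * r i) * e) by rewrite !mulrA.
  rewrite (bc_eTe hbc) ?mulrA ?ET_mule ?scalerA ?mulVf ?scale1r //; in_subalg.
under eq_bigr => i _ do rewrite ET_zre mulr_suml.
rewrite exchange_big [RHS]Dz; apply: eq_bigr => j _ /=.
have [Ta Tb] := Tab j; have [Db _] := hqb.2 _ Tb.
rewrite -[in RHS]Db mulr_sumr; apply: eq_bigr => i _.
by rewrite !mulrA -(mulrA _ _ e) -(bc_eS hbc) ?mulrA //; in_subalg.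
Qed.

Lemma quasi_basis_ET :
  quasi_basis T T1 ET (fun i => lam^-1 *: (r i * e)) (fun i => e * s i).
Proof.
split=> [i|z T1z]; first by split; in_subalg.
by split; [apply: quasi_basis_ETl | apply: quasi_basis_ETr].
Qed.

Lemma ET1 : \sum_(i < n) r i * s i = lam^-1 *: 1 -> ET 1 = 1.
Proof.
move=> sum_rs; rewrite -{1}(bc_unit hbc) ET_span => [|i]; last by split; in_subalg.
by rewrite sum_rs scalerA mulfV // scale1r.
Qed.

Lemma ET_nondegenerate w : T1 w -> (forall t, T t -> ET (w * (t * e)) = 0) -> w = 0.
Proof.
move=> T1w w_e; rewrite -(quasi_basis_ETl T1w); apply: big1 => i _.
by rewrite -scalerAr (bc_ETscale hbc) ?w_e ?scaler0 ?mul0r //; in_subalg.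
Qed.

Lemma mul_e_eq0 t : T t -> t * e = 0 -> t = 0.
Proof.
move=> Tt te0; have := ET_mule Tt.
rewrite te0 ET0 => /esym /eqP.
by rewrite scaler_eq0 (negPf hlam) => /eqP.
Qed.

Lemma T1_mul_e z : T1 z -> exists2 w, T w & z * e = w * e.
Proof.
move=> /(bc_span hbc) [m [a [b [Tab ->]]]].
exists (\sum_(j < m) a j * ES (b j)).
  by apply: subalg_sum => // j; case: (Tab j) => *; in_subalg.
rewrite !mulr_suml; apply: eq_bigr => j _; case: (Tab j) => Ta Tb.
have -> : a j * e * b j * e = a j * (e * b j * e) by rewrite !mulrA.
by rewrite (bc_eTe hbc) ?mulrA.
Qed.

Lemma irreducible_basic_construction : irreducible S T -> irreducible T T1.
Proof.
move=> irrT z [T1z Cz]; have [w Tw zew] := T1_mul_e T1z.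
have [c wc] : exists c : k, w = c *: 1.
  apply: irrT; split=> // x Sx; apply/eqP; rewrite -subr_eq0; apply/eqP.
  apply: mul_e_eq0; first by in_subalg.
  have wxe : w * x * e = x * w * e.
    rewrite -mulrA -(bc_eS hbc Sx) mulrA -zew -mulrA (bc_eS hbc Sx).
    by rewrite mulrA (Cz _ (S_T Sx)) -mulrA zew mulrA.
  by rewrite mulrBl wxe subrr.
exists c; apply/eqP; rewrite -subr_eq0; apply/eqP.
apply: ET_nondegenerate => [|t Tt]; first by in_subalg.
by rewrite mulrBl mulrA Cz // -mulrA zew wc -!scalerAl !mul1r -scalerAr subrr ET0.
Qed.

Lemma right_free_dual_basis p (u : 'I_p -> R) : right_free_basis T T1 u ->
  exists2 f : 'I_p -> R, (forall j, T1 (f j)) &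
    forall z, T1 z -> z = \sum_(j < p) u j * ET (f j * z).
Proof.
case=> T1u [span _].
have /fin_all_exists [d Dd] i : exists d : 'I_p -> R,
    (forall j, T (d j)) /\ lam^-1 *: (r i * e) = \sum_(j < p) u j * d j.
  by apply: span; in_subalg.
have Td i j : T (d i j) by case: (Dd i).
(* f j pairs the u-coordinates of the quasi-basis lam^-1 r_i e with the dual quasi-basis e s_i. *)
exists (fun j => \sum_(i < n) d i j * (e * s i)) => [j|z T1z]; first by in_subalg.
rewrite -{1}(quasi_basis_ETr T1z).
under eq_bigr => i _ do rewrite (Dd i).2 mulr_suml.
rewrite exchange_big; apply: eq_bigr => j _ /=.
rewrite mulr_suml ET_sum => [|i]; last by in_subalg.
rewrite mulr_sumr; apply: eq_bigr => i _.
by rewrite -(mulrA (d i j)) (ETMl (a := d i j)) ?mulrA //; in_subalg.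
Qed.

Lemma dual_basis_centralizer p (u f : 'I_p -> R) :
  (forall j, centralizer T1 S (u j)) -> right_free_basis T T1 u ->
  (forall j, T1 (f j)) -> (forall z, T1 z -> z = \sum_(j < p) u j * ET (f j * z)) ->
  forall j, centralizer T1 S (f j).
Proof.
move=> Cu [_ [_ free]] T1f Df j; split=> // x Sx.
(* Compare the u-coordinates of x z with those of x * (sum_i u i * ET (f i * z)). *)
have coef_eq z : T1 z -> forall i, ET (f i * (x * z)) - ET (x * f i * z) = 0.
  move=> T1z; apply: free => [i|]; first by in_subalg.
  rewrite (eq_bigr (fun i => u i * ET (f i * (x * z)) - u i * ET (x * f i * z))).
    rewrite sumrB -Df; last by in_subalg.
    rewrite {1}(Df z T1z) mulr_sumr; apply/eqP; rewrite subr_eq0; apply/eqP.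
    apply: eq_bigr => i _.
    by rewrite mulrA -(Cu i).2 // -mulrA -(mulrA x) (ETMl (a := x)) //; in_subalg.
  by move=> i _; rewrite mulrBr.
apply/eqP; rewrite -subr_eq0; apply/eqP.
apply: ET_nondegenerate => [|t Tt]; first by in_subalg.
by rewrite mulrBl ET_sub -?(mulrA (f j)) ?coef_eq //; in_subalg.
Qed.

Lemma centralizer_separates :
  (exists p (u : 'I_p -> R),
     (forall j, centralizer T1 S (u j)) /\ right_free_basis T T1 u) ->
  forall z, T1 z -> (forall f, centralizer T1 S f -> ET (f * z) = 0) -> z = 0.
Proof.
move=> [p [u [Cu free]]] z T1z fz0.
have [f T1f Df] := right_free_dual_basis free.
have Cf := dual_basis_centralizer Cu free T1f Df.
by rewrite (Df z T1z); apply: big1 => j _; rewrite fz0 ?mulr0.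
Qed.

End BasicConstruction.

Section Proposition.
Variables (k : fieldType) (R : algType k) (N M M1 M2 : R -> Prop) (E EM EM1 : R -> R).
Variables (n : nat) (xs ys : 'I_n -> R) (lam : k) (e1 e2 : R).
Hypotheses (hssi : ss_irreducible N M E xs ys lam)
  (hbc1 : basic_construction N M M1 E xs ys lam e1 EM)
  (hbc2 : basic_construction M M1 M2 EM (fun i => lam^-1 *: (xs i * e1))
    (fun i => e1 * ys i) lam e2 EM1)
  (hd2 : depth2 N M M1 M2).

Local Notation A := (centralizer M1 N).
Local Notation B := (centralizer M2 M).
Local Notation "⟨ a , b ⟩" := (pairing lam EM EM1 e1 e2 a b).

Let hM := ssi_subM hssi.
Let hlam := ssi_lam0 hssi.
Let hNM := ssi_NM hssi.
Let hqb := ssi_qb hssi.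
Let hM1 := bc_sub hbc1.
Let hM2 := bc_sub hbc2.
Let hMM1 := bc_incl hbc1.
Let N_M : forall x, N x -> M x := hNM.
Let M_M1 : forall x, M x -> M1 x := hMM1.
Let M1_M2 : forall x, M1 x -> M2 x := bc_incl hbc2.
Let E_N : forall x, M x -> N (E x). Proof. by case: (ssi_E hssi). Qed.
Let xs_M i : M (xs i) := (hqb.1 i).1.
Let ys_M i : M (ys i) := (hqb.1 i).2.
Let e1_M1 := bc_e hbc1.
Let e2_M2 := bc_e hbc2.
Let EM_M : forall z, M1 z -> M (EM z) := ET_T hM hbc1.
Let EM1_M1 : forall z, M2 z -> M1 (EM1 z) := ET_T hM1 hbc2.
Let qb1 := quasi_basis_ET hM hNM E_N hqb hbc1 hlam.
#[local] Hint Resolve hM hM1 hM2 N_M M_M1 M1_M2 E_N xs_M ys_M e1_M1 e2_M2 EM_M EM1_M1 : subalg.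

Lemma EM_EM1_scalar z : M2 z -> (forall x, N x -> z * x = x * z) ->
  exists c : k, EM (EM1 z) = c *: 1.
Proof.
move=> M2z Cz; apply: (ssi_irr hssi); split=> [|x Nx]; first by in_subalg.
rewrite -(ETMr hM hbc1) -?(ETMl hM hbc1) -?(ETMr hM1 hbc2) -?(ETMl hM1 hbc2) ?Cz //; in_subalg.
Qed.

Lemma pairing_scalar a b : A a -> B b -> exists c : k, ⟨a, b⟩ = c *: 1.
Proof.
move=> Aa Bb; have [||c Fc] := EM_EM1_scalar (z := a * e2 * e1 * b); first by in_subalg.
  move=> x Nx; have Mx := N_M Nx.
  rewrite -mulrA Bb.2 // !mulrA -(mulrA _ e1) (bc_eS hbc1 Nx) mulrA.
  by rewrite -(mulrA a) (bc_eS hbc2 Mx) mulrA Aa.2.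
by exists (lam ^- 2 * c); rewrite /pairing Fc scalerA.
Qed.

Lemma EM_EM1_pairing a b : EM (EM1 (a * e2 * e1 * b)) = lam ^+ 2 *: ⟨a, b⟩.
Proof. by rewrite /pairing scalerA mulfV ?scale1r // expf_neq0. Qed.

(* lam^-2 because the quasi-basis of M1 in M2 is lam^-1 *: (lam^-1 *: (xs i * e1)) * e2. *)
Definition A_of_B g := lam ^- 2 *: EM1 (g * e1 * e2).

Section FromBToA.
Variables (g : R) (Bg : B g).

Lemma A_of_B_in_A : A (A_of_B g).
Proof.
split=> [|x Nx]; first by rewrite /A_of_B; in_subalg.
have Mx := N_M Nx.
rewrite /A_of_B -scalerAl -scalerAr -(ETMr hM1 hbc2) -?(ETMl hM1 hbc2); try in_subalg.
rewrite -mulrA (bc_eS hbc2 Mx) mulrA -(mulrA g) (bc_eS hbc1 Nx) mulrA.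
by rewrite Bg.2 // !mulrA.
Qed.

Lemma B_expansion : g = \sum_(i < n) xs i * (A_of_B g * e2 * e1) * ys i.
Proof.
rewrite -{1}(quasi_basis_ETl hM1 hMM1 EM_M qb1 hbc2 hlam (z := g)); last by in_subalg.
apply: eq_bigr => i _.
have -> : g * (lam^-1 *: (lam^-1 *: (xs i * e1) * e2)) = lam ^- 2 *: (xs i * (g * e1 * e2)).
  by rewrite -scalerAl -!scalerAr scalerA -expr2 exprVn !mulrA Bg.2.
rewrite (bc_ETscale hbc2) ?(ETMl hM1 hbc2 (a := xs i)) /A_of_B; try in_subalg.
by rewrite -!scalerAl -scalerAr -scalerAl !mulrA.
Qed.

Lemma B_mul_e1 : g * e1 = A_of_B g * e2 * e1.
Proof.
have Aa := A_of_B_in_A.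
have [_ sum_xEy] := hqb.2 _ (subalg1 hM).
rewrite {1}B_expansion mulr_suml -[RHS]mul1r -{1}sum_xEy mulr_suml.
apply: eq_bigr => i _; have Ny := E_N (ys_M i); rewrite mulr1.
have -> : xs i * (A_of_B g * e2 * e1) * ys i * e1 = xs i * A_of_B g * e2 * (e1 * ys i * e1).
  by rewrite !mulrA.
rewrite (bc_eTe hbc1) // mulrA -(mulrA _ e2) (bc_eS hbc2 (N_M Ny)) mulrA.
by rewrite -(mulrA (xs i)) Aa.2 // !mulrA.
Qed.

Lemma EM1_mul_B b : B b -> EM1 (g * b) = lam *: ⟨A_of_B g, b⟩.
Proof.
move=> Bb; have Aa := A_of_B_in_A.
have [c Dc] : exists c : k, EM1 (g * b) = c *: 1.
  apply: (irreducible_basic_construction hM hNM E_N hqb hbc1 hlam (ssi_irr hssi)).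
  split=> [|x Mx]; first by in_subalg.
  rewrite -(ETMr hM1 hbc2) -?(ETMl hM1 hbc2); try in_subalg.
  by rewrite -mulrA Bb.2 // mulrA Bg.2 // mulrA.
have [d Dd] := pairing_scalar Aa Bb.
(* Being a scalar, EM1 (g * b) is fixed by EM. *)
transitivity (EM (EM1 (g * b))).
  by rewrite Dc (bc_ETscale hbc1) ?(ET1 hqb hbc1 hlam (ssi_lam hssi)) //; in_subalg.
have -> : g * b = \sum_(i < n) xs i * (A_of_B g * e2 * e1 * b) * ys i.
  rewrite {1}B_expansion mulr_suml; apply: eq_bigr => i _.
  by rewrite -mulrA -Bb.2 // !mulrA.
rewrite (ET_sum hbc2) => [|i]; last by in_subalg.
rewrite (ET_sum hbc1) => [|i]; last by in_subalg.
transitivity (\sum_(i < n) xs i * ((lam ^+ 2 * d) *: 1) * ys i).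
  apply: eq_bigr => i _.
  by rewrite (ET_bimod hM1 hbc2) ?(ET_bimod hM hbc1) ?EM_EM1_pairing ?Dd ?scalerA //; in_subalg.
under eq_bigr do rewrite -scalerAr -scalerAl mulr1.
by rewrite -scaler_sumr (ssi_lam hssi) Dd !scalerA mulrAC expr2 mulfK.
Qed.

End FromBToA.

Section Coproduct.
Variables (b : R) (Bb : B b) (m : nat) (b1 b2 : 'I_m -> R).
Hypotheses (Bb12 : forall j, B (b1 j) /\ B (b2 j))
  (Delta : forall a a', A a -> A a' ->
     \sum_(j < m) ⟨a, b1 j⟩ * ⟨a', b2 j⟩ = ⟨a * a', b⟩).

Let Bb1 j : B (b1 j) := (Bb12 j).1.
Let Bb2 j : B (b2 j) := (Bb12 j).2.
Let b_M2 : M2 b := Bb.1.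
Let b1_M2 j : M2 (b1 j) := (Bb1 j).1.
Let b2_M2 j : M2 (b2 j) := (Bb2 j).1.
#[local] Hint Resolve b_M2 b1_M2 b2_M2 : subalg.

Definition defect y := y * b - lam^-1 *: \sum_(j < m) b2 j * EM1 (e2 * y * b1 j).

Lemma defect_sum p (Y : 'I_p -> R) : (forall t, M1 (Y t)) ->
  defect (\sum_(t < p) Y t) = \sum_(t < p) defect (Y t).
Proof.
move=> M1Y; rewrite /defect sumrB mulr_suml -scaler_sumr exchange_big /=.
congr (_ - _ *: _); apply: eq_bigr => j _.
by rewrite mulr_sumr mulr_suml (ET_sum hbc2) ?mulr_sumr // => t; in_subalg.
Qed.

Lemma defect_bimod p q : M p -> M q -> defect (p * e1 * q) = p * defect e1 * q.
Proof.
move=> Mp Mq; rewrite /defect mulrBr mulrBl -scalerAr -scalerAl mulr_sumr mulr_suml.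
congr (_ - _ *: _); first by rewrite -!mulrA Bb.2.
apply: eq_bigr => j _.
have -> : e2 * (p * e1 * q) * b1 j = p * (e2 * e1 * b1 j) * q.
  by rewrite !mulrA (bc_eS hbc2 Mp) -!mulrA (Bb1 j).2.
by rewrite (ET_bimod hM1 hbc2) ?mulrA ?(Bb2 j).2 //; in_subalg.
Qed.

Lemma EM_EM1_defect_e1 c g : A c -> B g -> EM (EM1 (c * g * defect e1)) = 0.
Proof.
move=> Ac Bg; have Aa := A_of_B_in_A Bg; set a := A_of_B g in Aa *.
have term j : EM (EM1 (c * g * (b2 j * EM1 (e2 * e1 * b1 j)))) =
    (lam ^+ 2 * lam) *: (⟨c, b1 j⟩ * ⟨a, b2 j⟩).
  have [d Dd] := pairing_scalar Aa (Bb2 j).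
  have -> : c * g * (b2 j * EM1 (e2 * e1 * b1 j)) = c * (g * b2 j) * EM1 (e2 * e1 * b1 j).
    by rewrite !mulrA.
  rewrite (ET_bimod hM1 hbc2) ?(EM1_mul_B Bg) ?Dd; try in_subalg.
  rewrite scalerA -scalerAr mulr1 -scalerAl -(ETMl hM1 hbc2) ?(bc_ETscale hbc1); try in_subalg.
  rewrite !mulrA EM_EM1_pairing -scalerAr mulr1 [LHS]scalerA [RHS]scalerA.
  by rewrite mulrC mulrA.
rewrite /defect mulrBr -scalerAr mulr_sumr.
have -> : c * g * (e1 * b) = c * a * e2 * e1 * b.
  by rewrite !mulrA -(mulrA c g) B_mul_e1 // !mulrA.
rewrite (ET_sub hbc2) ?(bc_ETscale hbc2) ?(ET_sum hbc2); try in_subalg.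
rewrite (ET_sub hbc1) ?(bc_ETscale hbc1) ?(ET_sum hbc1); try in_subalg.
under eq_bigr do rewrite term.
rewrite EM_EM1_pairing -Delta // -scaler_sumr scalerA mulrCA mulVf ?mulr1 //.
by rewrite subrr.
Qed.

Lemma defect_e1 : defect e1 = 0.
Proof.
apply: (centralizer_separates hM1 hMM1 EM_M qb1 hbc2 hlam hd2.2) => [|g Bg].
  by rewrite /defect; in_subalg.
apply: (centralizer_separates hM hNM E_N hqb hbc1 hlam hd2.1) => [|c Ac].
  by rewrite /defect; in_subalg.
rewrite -(ETMl hM1 hbc2) ?mulrA ?EM_EM1_defect_e1 //; rewrite /defect; in_subalg.
Qed.

Lemma defect_eq0 y : M1 y -> defect y = 0.
Proof.
move=> /(bc_span hbc1) [p [q [q' [Mq ->]]]].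
rewrite defect_sum => [|t]; last by case: (Mq t) => *; in_subalg.
by apply: big1 => t _; case: (Mq t) => *; rewrite defect_bimod // defect_e1 mulr0 mul0r.
Qed.

End Coproduct.

End Proposition.

Theorem proposition4p6 (k : fieldType) (R : algType k)
  (N M M1 M2 : R -> Prop) (E EM EM1 : R -> R) (n : nat) (xs ys : 'I_n -> R)
  (lam : k) (e1 e2 : R) :
  ss_irreducible N M E xs ys lam ->
  basic_construction N M M1 E xs ys lam e1 EM ->
  basic_construction M M1 M2 EM (fun i => lam^-1 *: (xs i * e1))
    (fun i => e1 * ys i) lam e2 EM1 ->
  depth2 N M M1 M2 ->
  forall b : R, centralizer M2 M b ->
  (* Delta(b) = sum_j b1 j ⊗ b2 j in B ⊗ B *)
  forall (m : nat) (b1 b2 : 'I_m -> R),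
    (forall j, centralizer M2 M (b1 j) /\ centralizer M2 M (b2 j)) ->
    (forall a a', centralizer M1 N a -> centralizer M1 N a' ->
       \sum_(j < m) pairing lam EM EM1 e1 e2 a (b1 j) *
                    pairing lam EM EM1 e1 e2 a' (b2 j)
       = pairing lam EM EM1 e1 e2 (a * a') b) ->
  forall y : R, M1 y ->
    y * b = lam^-1 *: \sum_(j < m) b2 j * EM1 (e2 * y * b1 j).
Proof.
move=> hssi hbc1 hbc2 hd2 b Bb m b1 b2 Bb12 Delta y M1y.
apply/eqP; rewrite -subr_eq0; apply/eqP.
exact: (defect_eq0 hssi hbc1 hbc2 hd2 Bb Bb12 Delta M1y).
Qed.
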